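(* Let $V\in\mathcal{UM}$ with $\deg(V,0)=2$, let $\gamma,\bar\gamma\ge0$ with $\gamma+\bar\gamma>0$, and let $U(x)=\gamma W'(x)+\bar\gamma W'(-x)$. If the function $\gamma a+\bar\gamma\bar a:(0,\infty)\to\mathbb R$ has a real-analytic extension to $[0,\infty)$ (i.e. to an open set containing $[0,\infty)$), then $U$ is even. If moreover $V$ is not even, then $\gamma=\bar\gamma$.
   Context: $\mathcal{UM}$: real-analytic $V:\mathbb R\to\mathbb R_{\ge0}$ with $V(0)=0$, $yV'(y)>0$ for $y\neq0$, $V(y)\to\infty$ as $y\to\pm\infty$; $\deg(V,0)$ is the least $m$ with $V^{(m)}(0)\ne0$. For $\deg(V,0)=2$, $V_*$ is the bi-analytic map with $V_*'>0$ and $V_*^2=V$, and $W=V_*^{-1}$. $\bar V(y)=V(-y)$; $V^{-1}$ is the inverse of $V|_{[0,\infty)}$. $a(\theta)=\int_0^{V^{-1}(\theta)}\frac{dy}{\sqrt2\sqrt{\theta-V(y)}}$ and $\bar a(\theta)=\int_0^{\bar V^{-1}(\theta)}\frac{dy}{\sqrt2\sqrt{\theta-\bar V(y)}}$ for $\theta>0$; equivalently $\gamma a(\theta)+\bar\gamma\bar a(\theta)=\frac1{\sqrt2}\int_0^1\frac{U(\sqrt\theta s)}{\sqrt{1-s^2}}ds$. *)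

From Stdlib Require Import Reals ClassicalEpsilon.
From Coquelicot Require Import Coquelicot.
Open Scope R_scope.

Definition analytic_at (f : R -> R) (x0 : R) : Prop :=
  exists r : R, 0 < r /\ exists c : nat -> R,
    forall x, Rabs (x - x0) < r -> is_pseries c (x - x0) (f x).

Definition analytic_on (D : R -> Prop) (f : R -> R) : Prop :=
  forall x, D x -> analytic_at f x.

Definition UM (V : R -> R) : Prop :=
  analytic_on (fun _ => True) V /\
  (forall y, 0 <= V y) /\
  V 0 = 0 /\
  (forall y, y <> 0 -> 0 < y * Derive V y) /\
  is_lim V p_infty p_infty /\
  is_lim V m_infty p_infty.

Definition deg_at0 (V : R -> R) (m : nat) : Prop :=
  Derive_n V m 0 <> 0 /\ (forall k, (k < m)%nat -> Derive_n V k 0 = 0).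

Definition Vbar (V : R -> R) : R -> R := fun y => V (- y).

Definition Vinv (V : R -> R) (theta : R) : R :=
  epsilon (inhabits 0) (fun y => 0 <= y /\ V y = theta).

(* a(theta) = int_0^{V^{-1}(theta)} dy / (sqrt 2 sqrt(theta - V y)),
   an improper integral (singular at the upper endpoint). *)
Definition a_fun (V : R -> R) (theta : R) : R :=
  RInt_gen (fun y => 1 / (sqrt 2 * sqrt (theta - V y)))
           (at_point 0) (at_left (Vinv V theta)).

From Stdlib Require Import Reals Lra ClassicalEpsilon Classical.
From Coquelicot Require Import Coquelicot.
Open Scope R_scope.

(* Substituting y = W (sqrt theta * sin q) in a and abar gives
   sqrt 2 * (gamma a + gammab abar)(r ^ 2) = int_0^(PI/2) U (r sin q) dq  for r > 0.
   If the left-hand side extends analytically to 0, the right-hand side is an even germ,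
   so its odd derivatives at 0 vanish; as its n-th derivative at 0 is
   U^(n)(0) * int_0^(PI/2) sin^n q dq, all odd derivatives of U vanish at 0 and the
   analytic function U is even.  If gamma <> gammab this forces W' to be even, hence W and
   Vs odd, hence V = Vs ^ 2 even. *)

Definition pseries_on (f : R -> R) (x0 r : R) (c : nat -> R) : Prop :=
  forall x, Rabs (x - x0) < r -> is_pseries c (x - x0) (f x).

Definition analytic (f : R -> R) : Prop := forall x, analytic_at f x.

Lemma CV_radius_ge_ex_pseries (c : nat -> R) (x : R) :
  ex_pseries c x -> Rbar_le (Rabs x) (CV_radius c).
Proof.
  intros Hx. apply Rbar_not_lt_le. intros Hlt.
  apply (CV_disk_outside c x Hlt), ex_series_lim_0, ex_pseries_R, Hx.
Qed.

Section PseriesOn.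
Variables (f : R -> R) (x0 r : R) (c : nat -> R).
Hypothesis Hf : pseries_on f x0 r c.

Lemma pseries_on_CV_radius (z : R) : Rabs z < r -> Rbar_lt (Rabs z) (CV_radius c).
Proof.
  intros Hz. set (z' := (Rabs z + r) / 2).
  assert (Hz' : 0 <= z') by (unfold z'; pose proof (Rabs_pos z); lra).
  assert (Hle : Rbar_le (Rabs z') (CV_radius c)).
  { apply CV_radius_ge_ex_pseries. exists (f (z' + x0)).
    assert (H := Hf (z' + x0)). replace (z' + x0 - x0) with z' in H by ring.
    apply H. rewrite Rabs_pos_eq by exact Hz'. unfold z'; lra. }
  rewrite Rabs_pos_eq in Hle by lra.
  destruct (CV_radius c) as [R0| |]; simpl in *; unfold z' in Hle; lra || easy.
Qed.

Lemma pseries_on_PSeries (x : R) : Rabs (x - x0) < r -> f x = PSeries c (x - x0).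
Proof. intros Hx. symmetry. apply is_pseries_unique, Hf, Hx. Qed.

Lemma pseries_on_is_derive (x : R) :
  Rabs (x - x0) < r -> is_derive f x (PSeries (PS_derive c) (x - x0)).
Proof.
  intros Hx.
  apply is_derive_ext_loc with (fun t => PSeries c (t - x0)).
  - assert (Hd : 0 < r - Rabs (x - x0)) by lra.
    exists (mkposreal _ Hd). intros y Hy. change (Rabs (y - x) < r - Rabs (x - x0)) in Hy.
    symmetry. apply pseries_on_PSeries.
    pose proof (Rabs_triang (y - x) (x - x0)).
    replace (y - x + (x - x0)) with (y - x0) in * by ring. lra.
  - replace (PSeries (PS_derive c) (x - x0)) with (scal 1 (PSeries (PS_derive c) (x - x0)))
      by apply (scal_one (K := R_AbsRing)).
    apply (is_derive_comp (PSeries c) (fun t => t - x0)).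
    + apply is_derive_PSeries, pseries_on_CV_radius, Hx.
    + auto_derive; auto.
Qed.

Lemma pseries_on_Derive : pseries_on (Derive f) x0 r (PS_derive c).
Proof.
  intros x Hx. rewrite (is_derive_unique _ _ _ (pseries_on_is_derive x Hx)).
  apply PSeries_correct, CV_radius_inside. rewrite CV_radius_derive.
  apply pseries_on_CV_radius, Hx.
Qed.

Lemma pseries_on_Derive_n (n : nat) : 0 < r -> Derive_n f n x0 = c n * INR (Factorial.fact n).
Proof.
  intros Hr.
  rewrite (Derive_n_ext_loc f (fun t => PSeries c (t + - x0))).
  - rewrite Derive_n_comp_trans, Rplus_opp_r. apply Derive_n_coef.
    rewrite <- Rabs_R0. apply pseries_on_CV_radius. rewrite Rabs_R0. exact Hr.
  - exists (mkposreal r Hr). intros y Hy. apply pseries_on_PSeries, Hy.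
Qed.

End PseriesOn.

Section Analytic.
Variable f : R -> R.
Hypothesis Hf : analytic f.

Lemma analytic_Derive : analytic (Derive f).
Proof.
  intros x0. destruct (Hf x0) as [r [Hr [c Hc]]].
  exists r. split; [exact Hr|]. exists (PS_derive c). exact (pseries_on_Derive f x0 r c Hc).
Qed.

Lemma analytic_is_derive (x : R) : is_derive f x (Derive f x).
Proof.
  destruct (Hf x) as [r [Hr [c Hc]]]. apply Derive_correct.
  eexists. apply (pseries_on_is_derive f x r c Hc). rewrite Rminus_diag, Rabs_R0. exact Hr.
Qed.

Lemma analytic_continuous (x : R) : continuous f x.
Proof. apply (ex_derive_continuous f x). eexists. apply analytic_is_derive. Qed.

Lemma analytic_comp_opp : analytic (fun x => f (- x)).
Proof.
  intros x0. destruct (Hf (- x0)) as [r [Hr [c Hc]]].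
  exists r. split; [exact Hr|]. exists (fun n => (-1) ^ n * c n). intros x Hx.
  assert (H : is_pseries c ((-1) * (x - x0)) (f (- x))).
  { replace ((-1) * (x - x0)) with (- x - - x0) by ring. apply Hc.
    replace (- x - - x0) with (- (x - x0)) by ring. rewrite Rabs_Ropp. exact Hx. }
  apply is_pseries_R in H. apply is_pseries_R.
  apply is_series_ext with (2 := H). intros n.
  rewrite Rpow_mult_distr, <- Rmult_assoc, (Rmult_comm (c n)). reflexivity.
Qed.

End Analytic.

Lemma analytic_Derive_n (f : R -> R) (n : nat) : analytic f -> analytic (Derive_n f n).
Proof.
  intros Hf. induction n as [|n IHn]; [exact Hf|]. apply analytic_Derive, IHn.
Qed.

Lemma analytic_ex_derive_n (f : R -> R) (n : nat) (x : R) :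
  analytic f -> ex_derive_n f n x.
Proof.
  intros Hf.
  destruct n as [|n]; [exact I|]. simpl.
  eexists. apply analytic_is_derive, analytic_Derive_n, Hf.
Qed.

Lemma analytic_at_scal (f : R -> R) (k x0 : R) :
  analytic_at f x0 -> analytic_at (fun x => k * f x) x0.
Proof.
  intros [r [Hr [c Hc]]]. exists r. split; [exact Hr|].
  exists (fun n => k * c n). intros x Hx.
  assert (H := Hc x Hx). apply is_pseries_R in H. apply is_pseries_R.
  apply is_series_ext with (2 := is_series_scal_l k _ _ H). intros n.
  unfold scal; simpl; unfold mult; simpl. symmetry. apply Rmult_assoc.
Qed.

Lemma analytic_at_plus (f g : R -> R) (x0 : R) :
  analytic_at f x0 -> analytic_at g x0 -> analytic_at (fun x => f x + g x) x0.
Proof.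
  intros [r1 [Hr1 [c1 Hc1]]] [r2 [Hr2 [c2 Hc2]]].
  exists (Rmin r1 r2). split; [apply Rmin_glb_lt; assumption|].
  exists (fun n => c1 n + c2 n). intros x Hx.
  apply (is_pseries_plus c1 c2).
  - apply Hc1. apply Rlt_le_trans with (1 := Hx), Rmin_l.
  - apply Hc2. apply Rlt_le_trans with (1 := Hx), Rmin_r.
Qed.

Lemma R_connected (Z : R -> Prop) (a : R) :
  (forall x, locally x (fun y => Z y <-> Z x)) -> Z a -> forall x, Z x.
Proof.
  intros HZ HZa x. apply NNPP. intros HZx.
  (* The indicator of Z is locally constant, hence continuous, and the IVT forbids it
     to jump from 1 to 0. *)
  set (g := fun y => if excluded_middle_informative (Z y) then 1 else 0).
  assert (Hg : continuity g).
  { intros y. apply continuity_pt_filterlim.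
    apply continuous_ext_loc with (fun _ => g y); [|apply continuous_const].
    apply filter_imp with (2 := HZ y). intros t Ht. unfold g.
    destruct (excluded_middle_informative (Z y)), (excluded_middle_informative (Z t)); tauto. }
  assert (Hga : g a = 1) by (unfold g; destruct excluded_middle_informative; tauto).
  assert (Hgx : g x = 0) by (unfold g; destruct excluded_middle_informative; tauto).
  destruct (IVT_gen g a x (1/2) Hg) as [y [_ Hy]].
  { rewrite Hga, Hgx, Rmin_right, Rmax_left; lra. }
  unfold g in Hy. destruct excluded_middle_informative; lra.
Qed.

Lemma continuous_locally_neq (h : R -> R) (x c : R) :
  continuous h x -> h x <> c -> locally x (fun y => h y <> c).
Proof.
  intros Hh Hne.
  assert (He : 0 < Rabs (h x - c)) by (apply Rabs_pos_lt; lra).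
  apply (Hh (fun v => v <> c)). exists (mkposreal _ He). intros v Hv Hvc.
  change (Rabs (v - h x) < Rabs (h x - c)) in Hv. subst v.
  rewrite <- Rabs_Ropp in Hv. replace (- (c - h x)) with (h x - c) in Hv by ring. lra.
Qed.

Lemma analytic_at_eq_near (f g : R -> R) (x0 : R) :
  analytic_at f x0 -> analytic_at g x0 ->
  (forall n, Derive_n f n x0 = Derive_n g n x0) -> locally x0 (fun y => f y = g y).
Proof.
  intros [r1 [Hr1 [c1 Hc1]]] [r2 [Hr2 [c2 Hc2]]] Hfg.
  assert (Hc : forall n, c1 n = c2 n).
  { intros n. specialize (Hfg n).
    rewrite (pseries_on_Derive_n f x0 r1 c1 Hc1 n Hr1),
            (pseries_on_Derive_n g x0 r2 c2 Hc2 n Hr2) in Hfg.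
    apply Rmult_eq_reg_r in Hfg; [exact Hfg|apply INR_fact_neq_0]. }
  assert (Hr : 0 < Rmin r1 r2) by (apply Rmin_glb_lt; assumption).
  exists (mkposreal _ Hr). intros y Hy. change (Rabs (y - x0) < Rmin r1 r2) in Hy.
  rewrite (pseries_on_PSeries f x0 r1 c1 Hc1), (pseries_on_PSeries g x0 r2 c2 Hc2).
  - apply PSeries_ext, Hc.
  - apply Rlt_le_trans with (1 := Hy), Rmin_r.
  - apply Rlt_le_trans with (1 := Hy), Rmin_l.
Qed.

Lemma analytic_eq_of_Derive_n_eq (f g : R -> R) (x0 : R) :
  analytic f -> analytic g ->
  (forall n, Derive_n f n x0 = Derive_n g n x0) -> forall x, f x = g x.
Proof.
  intros Hf Hg Hx0 x.
  set (Z := fun y => forall n, Derive_n f n y = Derive_n g n y).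
  enough (HZ : Z x) by exact (HZ O).
  apply (R_connected Z x0); [|exact Hx0]. intros t.
  destruct (classic (Z t)) as [Zt|nZt].
  - assert (Hloc := locally_locally _ _ (analytic_at_eq_near f g t (Hf t) (Hg t) Zt)).
    apply filter_imp with (2 := Hloc). intros y Hy.
    split; [intros _; exact Zt|intros _ n; apply Derive_n_ext_loc, Hy].
  - destruct (not_all_ex_not _ _ nZt) as [n Hn].
    assert (Hc : continuous (fun y => Derive_n f n y - Derive_n g n y) t).
    { apply (continuous_minus (Derive_n f n) (Derive_n g n));
        apply analytic_continuous, analytic_Derive_n; assumption. }
    apply filter_imp with (2 := continuous_locally_neq _ t 0 Hc ltac:(lra)).
    intros y Hy. split; [intros HZy; exfalso; apply Hy; rewrite (HZy n); ring|tauto].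
Qed.

Lemma continuous_eq_of_eq_right (f g : R -> R) (x d : R) :
  0 < d -> continuous f x -> continuous g x ->
  (forall y, x < y < x + d -> f y = g y) -> f x = g x.
Proof.
  intros Hd Hf Hg Hfg.
  apply (filterlim_locally_unique (F := at_right x) f).
  - apply filterlim_filter_le_1 with (2 := Hf). apply filter_le_within.
  - apply filterlim_ext_loc with g; [|apply filterlim_filter_le_1 with (2 := Hg), filter_le_within].
    exists (mkposreal d Hd). intros y Hy Hxy. symmetry. apply Hfg.
    change (Rabs (y - x) < d) in Hy. apply Rabs_def2 in Hy. lra.
Qed.

Lemma is_pseries_null (x : R) : is_pseries (fun _ => 0) x 0.
Proof.
  assert (H := is_pseries_0 (K := R_AbsRing) (fun _ : nat => 0)).
  apply is_pseries_R in H. apply is_pseries_R.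
  apply is_series_ext with (2 := H). intros n. rewrite !Rmult_0_l. reflexivity.
Qed.

(* The power series of [phi (x ^ 2)] has only even terms and governs [g] to the right of [0]. *)
Lemma Derive_n_odd_eq0_of_even_germ (g phi : R -> R) (rho : R) (n : nat) :
  0 < rho -> analytic_at phi 0 ->
  (forall r, 0 < r < rho -> g r = phi (r ^ 2)) ->
  continuous (Derive_n g n) 0 -> Nat.Odd n -> Derive_n g n 0 = 0.
Proof.
  intros Hrho [rF [HrF [c Hc]]] Hg Hgc [m ->].
  set (e := fun k => if Nat.even k then c (Nat.div2 k) else 0).
  set (d := Rmin rho (Rmin rF 1)).
  assert (Hd : 0 < d) by (repeat apply Rmin_glb_lt; lra).
  assert (Hdrho : d <= rho) by apply Rmin_l.
  assert (HdF : d <= rF) by (eapply Rle_trans; [apply Rmin_r|apply Rmin_l]).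
  assert (Hd1 : d <= 1) by (eapply Rle_trans; [apply Rmin_r|apply Rmin_r]).
  assert (He : pseries_on (fun x => phi (x ^ 2)) 0 d e).
  { intros x Hx. rewrite Rminus_0_r in *.
    replace (phi (x ^ 2)) with (phi (x ^ 2) + x * 0) by ring.
    apply is_pseries_odd_even.
    - apply is_pseries_ext with c.
      { intros k. unfold e. rewrite Nat.even_even, Nat.div2_even. reflexivity. }
      assert (H := Hc (x ^ 2)). rewrite Rminus_0_r in H. apply H.
      rewrite <- RPow_abs. pose proof (Rabs_pos x). simpl. nra.
    - apply is_pseries_ext with (fun _ => 0).
      { intros k. unfold e. rewrite Nat.even_odd. reflexivity. }
      apply is_pseries_null. }
  assert (Hrad : Rbar_lt 0 (CV_radius e)).
  { rewrite <- Rabs_R0. apply (pseries_on_CV_radius _ _ _ _ He). rewrite Rabs_R0. exact Hd. }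
  rewrite (continuous_eq_of_eq_right (Derive_n g (2 * m + 1))
                                     (Derive_n (PSeries e) (2 * m + 1)) 0 d).
  - rewrite Derive_n_coef by exact Hrad. unfold e. rewrite Nat.even_odd. ring.
  - exact Hd.
  - exact Hgc.
  - apply (ex_derive_continuous (Derive_n (PSeries e) (2 * m + 1))).
    apply (ex_derive_n_PSeries (S (2 * m + 1))). rewrite Rabs_R0. exact Hrad.
  - intros y Hy. apply Derive_n_ext_loc.
    assert (Hy' : 0 < Rmin y (d - y)) by (apply Rmin_glb_lt; lra).
    exists (mkposreal _ Hy'). intros t Ht. change (Rabs (t - y) < Rmin y (d - y)) in Ht.
    pose proof (Rmin_l y (d - y)). pose proof (Rmin_r y (d - y)). apply Rabs_def2 in Ht.
    rewrite Hg by lra. replace t with (t - 0) at 2 by ring.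
    apply (pseries_on_PSeries _ _ _ _ He). rewrite Rminus_0_r, Rabs_pos_eq; lra.
Qed.

Lemma analytic_even_of_odd_Derive_n_eq0 (U : R -> R) :
  analytic U -> (forall n, Nat.Odd n -> Derive_n U n 0 = 0) -> forall x, U (- x) = U x.
Proof.
  intros HU Hodd.
  apply (analytic_eq_of_Derive_n_eq _ _ 0); [apply analytic_comp_opp, HU|exact HU|].
  intros n. rewrite Derive_n_comp_opp, Ropp_0.
  - destruct (Nat.Even_or_Odd n) as [[m ->]|Hn].
    + rewrite pow_mult. replace ((-1) ^ 2) with 1 by ring. rewrite pow1. ring.
    + rewrite Hodd by exact Hn. ring.
  - apply filter_forall. intros y k _. apply analytic_ex_derive_n, HU.
Qed.

Definition arcsine_transform (U : R -> R) (n : nat) (r : R) : R :=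
  RInt (fun p => sin p ^ n * Derive_n U n (r * sin p)) 0 (PI / 2).

Lemma RInt_sin_pow_pos (n : nat) : 0 < RInt (fun p => sin p ^ n) 0 (PI / 2).
Proof.
  pose proof PI_RGT_0. apply RInt_gt_0; [lra| |].
  - intros p Hp. apply pow_lt, sin_gt_0; lra.
  - intros p _. apply (ex_derive_continuous (fun p => sin p ^ n)). auto_derive. exact I.
Qed.

Section ArcsineTransform.
Variable U : R -> R.
Hypothesis HU : analytic U.

Lemma is_derive_arcsine_transform (n : nat) (r : R) :
  is_derive (arcsine_transform U n) r (arcsine_transform U (S n) r).
Proof.
  set (G := Derive_n U n).
  assert (HG : analytic G) by apply analytic_Derive_n, HU.
  assert (HdG : forall t u, is_derive (fun u => sin t ^ n * G (u * sin t)) u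
                                      (sin t ^ S n * Derive G (u * sin t))).
  { intros t u. auto_derive.
    - eexists. apply analytic_is_derive, HG.
    - simpl. rewrite Rmult_1_l, <- Rmult_assoc, (Rmult_comm (sin t ^ n)). reflexivity. }
  unfold arcsine_transform. fold G.
  replace (RInt _ 0 (PI / 2)) with
    (RInt (fun t => Derive (fun u => sin t ^ n * G (u * sin t)) r) 0 (PI / 2))
    by (apply RInt_ext; intros t _; apply is_derive_unique, HdG).
  apply (is_derive_RInt_param (fun u t => sin t ^ n * G (u * sin t))).
  - apply filter_forall. intros u t _. eexists. apply HdG.
  - intros t _.
    apply continuity_2d_pt_ext with (fun u v => sin v ^ S n * Derive G (u * sin v)).
    { intros u v. symmetry. apply is_derive_unique, HdG. }
    apply continuity_2d_pt_mult.
    + apply (continuity_1d_2d_pt_comp (fun v => sin v ^ S n) (fun u v => v));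
        [apply derivable_continuous_pt; auto_derive; trivial|apply continuity_2d_pt_id2].
    + apply (continuity_1d_2d_pt_comp (Derive G) (fun u v => u * sin v)).
      * apply continuity_pt_filterlim, analytic_continuous, analytic_Derive, HG.
      * apply continuity_2d_pt_mult; [apply continuity_2d_pt_id1|].
        apply (continuity_1d_2d_pt_comp sin (fun u v => v));
          [apply continuity_sin|apply continuity_2d_pt_id2].
  - apply filter_forall. intros u.
    apply (ex_RInt_continuous (fun t => sin t ^ n * G (u * sin t))). intros t _.
    apply (ex_derive_continuous (fun t => sin t ^ n * G (u * sin t))).
    auto_derive. eexists. apply analytic_is_derive, HG.
Qed.

Lemma Derive_n_arcsine_transform (n : nat) (r : R) :
  Derive_n (arcsine_transform U 0) n r = arcsine_transform U n r.
Proof.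
  revert r. induction n as [|n IHn]; intros r; [reflexivity|].
  simpl. rewrite (Derive_ext _ (arcsine_transform U n)) by exact IHn.
  apply is_derive_unique, is_derive_arcsine_transform.
Qed.

Lemma arcsine_transform_at_0 (n : nat) :
  arcsine_transform U n 0 = Derive_n U n 0 * RInt (fun p => sin p ^ n) 0 (PI / 2).
Proof.
  unfold arcsine_transform.
  apply is_RInt_unique, is_RInt_ext with (fun p => scal (Derive_n U n 0) (sin p ^ n)).
  - intros p _. rewrite Rmult_0_l. apply Rmult_comm.
  - apply (is_RInt_scal (fun p => sin p ^ n)), (RInt_correct (fun p => sin p ^ n)).
    apply (ex_RInt_continuous (fun p => sin p ^ n)).
    intros p _. apply (ex_derive_continuous (fun p => sin p ^ n)). auto_derive. exact I.
Qed.

Lemma Derive_n_odd_eq0_of_even_arcsine_transform (phi : R -> R) (rho : R) :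
  0 < rho -> analytic_at phi 0 ->
  (forall r, 0 < r < rho -> arcsine_transform U 0 r = phi (r ^ 2)) ->
  forall n, Nat.Odd n -> Derive_n U n 0 = 0.
Proof.
  intros Hrho Hphi Heq n Hn.
  assert (H := Derive_n_odd_eq0_of_even_germ _ phi rho n Hrho Hphi Heq).
  rewrite Derive_n_arcsine_transform, arcsine_transform_at_0 in H.
  - apply Rmult_integral in H. destruct H as [H|H]; [exact H|].
    pose proof (RInt_sin_pow_pos n). lra.
  - apply continuous_ext with (arcsine_transform U n).
    { intros r. symmetry. apply Derive_n_arcsine_transform. }
    apply (ex_derive_continuous (arcsine_transform U n)).
    eexists. apply is_derive_arcsine_transform.
  - exact Hn.
Qed.

End ArcsineTransform.

Lemma incr_le (G : R -> R) :
  (forall x y, x < y -> G x < G y) -> forall x y, x <= y -> G x <= G y.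
Proof. intros HG x y [Hlt|Heq]; [left; apply HG, Hlt|right; rewrite Heq; reflexivity]. Qed.

Lemma arcsine_sq_lt (theta q t : R) : 0 < theta -> 0 <= q < PI / 2 ->
  0 <= t <= sqrt theta * sin q -> t ^ 2 < theta.
Proof.
  intros Htheta Hq Ht.
  assert (Hsin : 0 <= sin q) by (apply sin_ge_0; pose proof PI_RGT_0; lra).
  assert (Hcos : 0 < cos q) by (apply cos_gt_0; lra).
  pose proof (sin2_cos2 q) as Hsc. unfold Rsqr in Hsc.
  pose proof (pow2_sqrt theta (Rlt_le _ _ Htheta)) as Hst2.
  pose proof (sqrt_lt_R0 theta Htheta) as Hst.
  assert (Hpos : 0 < sqrt theta ^ 2 * cos q ^ 2) by (apply Rmult_lt_0_compat; apply pow_lt; lra).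
  assert (Hbound : (sqrt theta * sin q) ^ 2 < theta).
  { rewrite <- Hst2 at 2.
    replace (sqrt theta ^ 2) with (sqrt theta ^ 2 * (sin q * sin q + cos q * cos q))
      by (rewrite Hsc; ring).
    nra. }
  nra.
Qed.

Section ArcsineSubstitution.
Variables (Vf T S S' : R -> R).
Hypotheses (HVf : forall y, Vf y = T y ^ 2)
  (HST : forall y, S (T y) = y) (HTS : forall x, T (S x) = x)
  (HT_incr : forall x y, x < y -> T x < T y) (HT0 : T 0 = 0)
  (HT_cont : forall y, continuous T y)
  (HS : forall x, is_derive S x (S' x)) (HS'_cont : forall x, continuous S' x).

Lemma strict_incr_inverse : forall x y, x < y -> S x < S y.
Proof.
  intros x y Hxy. apply Rnot_le_lt. intros [Hlt|Heq].
  - apply HT_incr in Hlt. rewrite !HTS in Hlt. lra.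
  - apply (f_equal T) in Heq. rewrite !HTS in Heq. lra.
Qed.

Lemma inverse_fix_0 : S 0 = 0.
Proof. pose proof (HST 0) as H. rewrite HT0 in H. exact H. Qed.

Lemma Vinv_eq_inverse_sqrt (theta : R) : 0 <= theta -> Vinv Vf theta = S (sqrt theta).
Proof.
  intros Htheta. unfold Vinv.
  destruct (epsilon_spec (inhabits 0) (fun y => 0 <= y /\ Vf y = theta)) as [Hy HVy].
  { exists (S (sqrt theta)). split.
    - rewrite <- inverse_fix_0. apply (incr_le S strict_incr_inverse), sqrt_pos.
    - rewrite HVf, HTS. apply pow2_sqrt, Htheta. }
  set (y := epsilon _ _) in *.
  assert (HTy : 0 <= T y) by (rewrite <- HT0; apply (incr_le T HT_incr), Hy).
  rewrite <- (HST y), <- HVy, HVf, sqrt_pow2 by exact HTy. reflexivity.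
Qed.

Lemma continuous_a_integrand (theta y : R) :
  T y ^ 2 < theta -> continuous (fun y => 1 / (sqrt 2 * sqrt (theta - Vf y))) y.
Proof.
  intros Hy.
  apply continuous_ext with (fun y => (fun t => 1 / (sqrt 2 * sqrt (theta - t ^ 2))) (T y)).
  { intros z. rewrite HVf. reflexivity. }
  apply (continuous_comp T (fun t => 1 / (sqrt 2 * sqrt (theta - t ^ 2)))); [apply HT_cont|].
  apply (ex_derive_continuous (fun t => 1 / (sqrt 2 * sqrt (theta - t ^ 2)))).
  auto_derive. split; [lra|split; [|exact I]].
  apply Rgt_not_eq, Rmult_lt_0_compat; apply sqrt_lt_R0; lra.
Qed.

(* [theta - (sqrt theta * sin q) ^ 2 = (sqrt theta * cos q) ^ 2] cancels the Jacobian. *)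
Lemma a_integrand_arcsine (theta q : R) : 0 < theta -> 0 <= q < PI / 2 ->
  sqrt theta * cos q * S' (sqrt theta * sin q) *
    (1 / (sqrt 2 * sqrt (theta - Vf (S (sqrt theta * sin q))))) =
  S' (sqrt theta * sin q) / sqrt 2.
Proof.
  intros Htheta Hq. set (st := sqrt theta).
  assert (Hst : 0 < st) by apply sqrt_lt_R0, Htheta.
  assert (Hcos : 0 < cos q) by (apply cos_gt_0; lra).
  assert (Hsq2 : 0 < sqrt 2) by (apply sqrt_lt_R0; lra).
  replace (theta - Vf (S (st * sin q))) with ((st * cos q) ^ 2).
  - rewrite sqrt_pow2 by (apply Rmult_le_pos; lra). field. lra.
  - rewrite HVf, HTS. unfold st. rewrite <- (pow2_sqrt theta) at 2 by lra.
    pose proof (sin2_cos2 q) as Hsc. unfold Rsqr in Hsc. nra.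
Qed.

Lemma is_RInt_arcsine_subst (theta p : R) : 0 < theta -> 0 <= p < PI / 2 ->
  is_RInt (fun y => 1 / (sqrt 2 * sqrt (theta - Vf y))) 0 (S (sqrt theta * sin p))
          (RInt (fun q => S' (sqrt theta * sin q) / sqrt 2) 0 p).
Proof.
  intros Htheta Hp. pose proof PI_RGT_0.
  set (st := sqrt theta). set (f := fun y => 1 / (sqrt 2 * sqrt (theta - Vf y))).
  assert (Hq : forall q, Rmin 0 p <= q <= Rmax 0 p -> 0 <= q < PI / 2).
  { intros q. rewrite Rmin_left, Rmax_right by lra. lra. }
  assert (Hg : forall q, Rmin 0 p <= q <= Rmax 0 p ->
            is_derive (fun q => S (st * sin q)) q (st * cos q * S' (st * sin q)) /\
            continuous (fun q => st * cos q * S' (st * sin q)) q).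
  { intros q _. split.
    - apply (is_derive_comp S (fun q => st * sin q) q); [apply HS|auto_derive; [exact I|ring]].
    - apply (continuous_mult (fun q => st * cos q) (fun q => S' (st * sin q))).
      + apply (ex_derive_continuous (fun q => st * cos q)). auto_derive. exact I.
      + apply (continuous_comp (fun q => st * sin q) S'); [|apply HS'_cont].
        apply (ex_derive_continuous (fun q => st * sin q)). auto_derive. exact I. }
  assert (Hf : forall q, Rmin 0 p <= q <= Rmax 0 p -> continuous f (S (st * sin q))).
  { intros q Hq'. apply Hq in Hq'. apply continuous_a_integrand. rewrite HTS.
    apply (arcsine_sq_lt theta q); [exact Htheta|exact Hq'|split; [|apply Rle_refl]].
    apply Rmult_le_pos; [apply sqrt_pos|apply sin_ge_0; lra]. }
  assert (Hcomp := is_RInt_comp f (fun q => S (st * sin q))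
                     (fun q => st * cos q * S' (st * sin q)) 0 p Hf Hg).
  cbv beta in Hcomp. rewrite sin_0, Rmult_0_r, inverse_fix_0 in Hcomp.
  replace (RInt (fun q => S' (st * sin q) / sqrt 2) 0 p) with (RInt f 0 (S (st * sin p))).
  - apply (RInt_correct f), ex_RInt_continuous. intros y Hy.
    assert (Hp' : 0 <= S (st * sin p)).
    { rewrite <- inverse_fix_0. apply (incr_le S strict_incr_inverse).
      apply Rmult_le_pos; [apply sqrt_pos|apply sin_ge_0; lra]. }
    rewrite Rmin_left, Rmax_right in Hy by exact Hp'.
    apply continuous_a_integrand, (arcsine_sq_lt theta p); [exact Htheta|exact Hp|].
    rewrite <- HT0, <- (HTS (sqrt theta * sin p)). split; apply (incr_le T HT_incr), Hy.
  - symmetry. apply is_RInt_unique, is_RInt_ext with (2 := Hcomp). intros q Hq'.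
    apply a_integrand_arcsine; [exact Htheta|]. apply Hq. lra.
Qed.

Lemma arcsine_parameter (theta p0 u : R) : 0 < theta -> 0 <= p0 < PI / 2 ->
  S (sqrt theta * sin p0) < u < S (sqrt theta) ->
  exists p, p0 < p < PI / 2 /\ S (sqrt theta * sin p) = u.
Proof.
  intros Htheta Hp0 Hu. pose proof PI_RGT_0.
  set (st := sqrt theta) in *.
  assert (Hst : 0 < st) by apply sqrt_lt_R0, Htheta.
  assert (HTu : st * sin p0 < T u < st).
  { destruct Hu as [Hu1 Hu2]. apply HT_incr in Hu1, Hu2. rewrite !HTS in Hu1, Hu2. lra. }
  assert (Hsin0 : 0 <= sin p0) by (apply sin_ge_0; lra).
  assert (Hv : sin p0 < T u / st < 1).
  { split; apply (Rmult_lt_reg_r st); try exact Hst;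
      unfold Rdiv; rewrite Rmult_assoc, Rinv_l, Rmult_1_r by lra; lra. }
  exists (asin (T u / st)). split; [split|].
  - apply Rnot_le_lt. intros Hle.
    assert (Hsin : sin (asin (T u / st)) <= sin p0)
      by (apply sin_incr_1; pose proof (asin_bound (T u / st)); lra).
    rewrite sin_asin in Hsin by lra. lra.
  - apply asin_bound_lt. lra.
  - rewrite sin_asin by lra. replace (st * (T u / st)) with (T u) by (field; lra). apply HST.
Qed.

Lemma a_fun_arcsine (theta : R) : 0 < theta ->
  a_fun Vf theta = RInt (fun q => S' (sqrt theta * sin q) / sqrt 2) 0 (PI / 2).
Proof.
  intros Htheta. pose proof PI_RGT_0.
  set (h := fun q => S' (sqrt theta * sin q) / sqrt 2).
  assert (Hh : forall q, continuous h q).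
  { intros q. apply (continuous_scal_l (fun q => S' (sqrt theta * sin q)) (/ sqrt 2)).
    apply (continuous_comp (fun q => sqrt theta * sin q) S'); [|apply HS'_cont].
    apply (ex_derive_continuous (fun q => sqrt theta * sin q)). auto_derive. exact I. }
  assert (HPhi : continuous (fun p => RInt h 0 p) (PI / 2)).
  { apply (continuous_RInt_1 h 0 (PI / 2) (fun p => RInt h 0 p)). apply filter_forall. intros p.
    apply (RInt_correct h), ex_RInt_continuous. intros q _. apply Hh. }
  unfold a_fun. rewrite Vinv_eq_inverse_sqrt by lra. apply is_RInt_gen_unique.
  intros P [eps HP].
  destruct (proj1 (filterlim_locally _ _) HPhi eps) as [[eta Heta] Hnear]. simpl in Hnear.
  set (p0 := Rmax 0 (PI / 2 - eta / 2)).
  assert (Hp0 : 0 <= p0 < PI / 2) by (unfold p0, Rmax; destruct Rle_dec; lra).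
  assert (Hu0 : S (sqrt theta * sin p0) < S (sqrt theta)).
  { apply strict_incr_inverse. rewrite <- (Rmult_1_r (sqrt theta)) at 2.
    apply Rmult_lt_compat_l; [apply sqrt_lt_R0, Htheta|].
    rewrite <- sin_PI2. apply sin_increasing_1; lra. }
  apply Filter_prod with (fun x => x = 0) (fun u => S (sqrt theta * sin p0) < u < S (sqrt theta)).
  - reflexivity.
  - exists (mkposreal _ (proj2 (Rlt_0_minus _ _) Hu0)). intros u Hu Hlt.
    change (Rabs (u - S (sqrt theta)) < S (sqrt theta) - S (sqrt theta * sin p0)) in Hu.
    apply Rabs_def2 in Hu. lra.
  - intros x u -> Hu. destruct (arcsine_parameter theta p0 u Htheta Hp0 Hu) as [p [Hp <-]].
    exists (RInt h 0 p). split; [apply is_RInt_arcsine_subst; lra|].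
    apply HP, Hnear. change (Rabs (p - PI / 2) < eta).
    rewrite Rabs_left by lra. unfold p0, Rmax in Hp. destruct Rle_dec in Hp; lra.
Qed.

End ArcsineSubstitution.

Section SquareRootPotential.
Variables (V Vs W : R -> R).
Hypotheses (HVs : analytic Vs) (HW : analytic W) (HdVs : forall y, 0 < Derive Vs y)
  (HVsV : forall y, Vs y ^ 2 = V y)
  (HWVs : forall y, W (Vs y) = y) (HVsW : forall x, Vs (W x) = x) (HV0 : V 0 = 0).

Lemma sqrt_potential_incr : forall x y, x < y -> Vs x < Vs y.
Proof.
  intros x y Hxy. apply (incr_function Vs m_infty p_infty (Derive Vs)); try easy.
  - intros z _ _. apply analytic_is_derive, HVs.
  - intros z _ _. apply HdVs.
Qed.

Lemma sqrt_potential_0 : Vs 0 = 0.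
Proof. pose proof (HVsV 0) as H. rewrite HV0 in H. simpl in H. nra. Qed.

Lemma a_fun_arcsine_right (theta : R) : 0 < theta ->
  a_fun V theta = RInt (fun q => Derive W (sqrt theta * sin q) / sqrt 2) 0 (PI / 2).
Proof.
  apply (a_fun_arcsine V Vs W (Derive W)).
  - intros y. symmetry. apply HVsV.
  - exact HWVs.
  - exact HVsW.
  - exact sqrt_potential_incr.
  - exact sqrt_potential_0.
  - intros y. apply analytic_continuous, HVs.
  - intros x. apply analytic_is_derive, HW.
  - intros x. apply analytic_continuous, analytic_Derive, HW.
Qed.

(* The reflected potential [Vbar V] has square root [- Vs (- y)], with inverse [- W (- x)]. *)
Lemma a_fun_arcsine_left (theta : R) : 0 < theta ->
  a_fun (Vbar V) theta = RInt (fun q => Derive W (- (sqrt theta * sin q)) / sqrt 2) 0 (PI / 2).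
Proof.
  apply (a_fun_arcsine (Vbar V) (fun y => - Vs (- y)) (fun x => - W (- x))
                       (fun x => Derive W (- x))).
  - intros y. unfold Vbar. rewrite <- HVsV. ring.
  - intros y. rewrite Ropp_involutive, HWVs. ring.
  - intros x. rewrite Ropp_involutive, HVsW. ring.
  - intros x y Hxy. apply Ropp_lt_contravar, sqrt_potential_incr. lra.
  - rewrite Ropp_0, sqrt_potential_0. ring.
  - intros y. apply (continuous_opp (fun y => Vs (- y))), (continuous_comp Ropp Vs).
    + apply (ex_derive_continuous Ropp). auto_derive. exact I.
    + apply analytic_continuous, HVs.
  - intros x. auto_derive.
    + eexists. apply analytic_is_derive, HW.
    + change (- (- (1) * Derive W (- x)) = Derive W (- x)). ring.
  - intros x. apply (continuous_comp Ropp (Derive W)).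
    + apply (ex_derive_continuous Ropp). auto_derive. exact I.
    + apply analytic_continuous, analytic_Derive, HW.
Qed.

Lemma arcsine_transform_a_fun (gamma gammab r : R) : 0 < r ->
  arcsine_transform (fun x => gamma * Derive W x + gammab * Derive W (- x)) 0 r =
  sqrt 2 * (gamma * a_fun V (r ^ 2) + gammab * a_fun (Vbar V) (r ^ 2)).
Proof.
  intros Hr. assert (Hsq2 : 0 < sqrt 2) by (apply sqrt_lt_R0; lra).
  rewrite a_fun_arcsine_right, a_fun_arcsine_left, sqrt_pow2 by (try apply pow_lt; lra).
  set (f1 := fun q => Derive W (r * sin q)). set (f2 := fun q => Derive W (- (r * sin q))).
  assert (HdW : forall x, ex_derive (Derive W) x).
  { intros x. eexists. apply analytic_is_derive, analytic_Derive, HW. }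
  assert (E1 : is_RInt f1 0 (PI / 2) (RInt f1 0 (PI / 2))).
  { apply (RInt_correct f1), (ex_RInt_continuous f1). intros q _.
    apply (ex_derive_continuous f1). unfold f1. auto_derive. apply HdW. }
  assert (E2 : is_RInt f2 0 (PI / 2) (RInt f2 0 (PI / 2))).
  { apply (RInt_correct f2), (ex_RInt_continuous f2). intros q _.
    apply (ex_derive_continuous f2). unfold f2. auto_derive. apply HdW. }
  replace (RInt (fun q => Derive W (r * sin q) / sqrt 2) 0 (PI / 2))
    with (/ sqrt 2 * RInt f1 0 (PI / 2)).
  2: { symmetry. apply is_RInt_unique.
       apply is_RInt_ext with (fun q => scal (/ sqrt 2) (f1 q)); [intros q _; apply Rmult_comm|].
       apply (is_RInt_scal f1), E1. }
  replace (RInt (fun q => Derive W (- (r * sin q)) / sqrt 2) 0 (PI / 2))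
    with (/ sqrt 2 * RInt f2 0 (PI / 2)).
  2: { symmetry. apply is_RInt_unique.
       apply is_RInt_ext with (fun q => scal (/ sqrt 2) (f2 q)); [intros q _; apply Rmult_comm|].
       apply (is_RInt_scal f2), E2. }
  replace (arcsine_transform _ 0 r)
    with (gamma * RInt f1 0 (PI / 2) + gammab * RInt f2 0 (PI / 2)).
  2: { symmetry. apply is_RInt_unique.
       apply is_RInt_ext with (fun q => plus (scal gamma (f1 q)) (scal gammab (f2 q))).
       - intros q _. unfold f1, f2, plus, scal; simpl; unfold mult; simpl. ring.
       - apply (is_RInt_plus (fun q => scal gamma (f1 q)) (fun q => scal gammab (f2 q)));
           [apply (is_RInt_scal f1), E1|apply (is_RInt_scal f2), E2]. }
  field. lra.
Qed.

Lemma potential_even_of_Derive_inverse_even :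
  (forall x, Derive W (- x) = Derive W x) -> forall y, V (- y) = V y.
Proof.
  intros HWe y.
  set (g := fun x => W x + W (- x)).
  assert (Hg : forall t, is_derive g t zero).
  { intros t. unfold g. auto_derive.
    - split; [|split; [|exact I]]; eexists; apply analytic_is_derive, HW.
    - change (1 * Derive W t + - (1) * Derive W (- t) = 0). rewrite HWe. ring. }
  assert (HW0 : W 0 = 0) by (rewrite <- sqrt_potential_0 at 1; apply HWVs).
  assert (HWodd : forall x, W (- x) = - W x).
  { intros x. enough (Hgx : g x = g 0) by (unfold g in Hgx; rewrite Ropp_0, HW0 in Hgx; lra).
    destruct (Rtotal_order x 0) as [Hlt|[Heq|Hgt]].
    - apply (eq_is_derive g); [intros t _; apply Hg|exact Hlt].
    - rewrite Heq. reflexivity.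
    - symmetry. apply (eq_is_derive g); [intros t _; apply Hg|exact Hgt]. }
  rewrite <- !HVsV. replace (- y) with (W (- Vs y)) by (rewrite HWodd, HWVs; reflexivity).
  rewrite HVsW. ring.
Qed.

End SquareRootPotential.

Theorem lemma5 (V Vs W : R -> R) (gamma gammab : R) :
  UM V -> deg_at0 V 2 ->
  analytic_on (fun _ => True) Vs -> analytic_on (fun _ => True) W ->
  (forall y, 0 < Derive Vs y) ->
  (forall y, Vs y ^ 2 = V y) ->
  (forall y, W (Vs y) = y) -> (forall x, Vs (W x) = x) ->
  0 <= gamma -> 0 <= gammab -> 0 < gamma + gammab ->
  (exists (O : R -> Prop) (F : R -> R),
      open O /\ (forall t, 0 <= t -> O t) /\ analytic_on O F /\
      (forall t, 0 < t ->
         F t = gamma * a_fun V t + gammab * a_fun (Vbar V) t)) ->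
  let U := fun x => gamma * Derive W x + gammab * Derive W (- x) in
  (forall x, U (- x) = U x) /\
  (~ (forall y, V (- y) = V y) -> gamma = gammab).
Proof.
  intros [_ [_ [HV0 _]]] _ HVs HW HdVs HVsV HWVs HVsW _ _ _ [O [F [_ [HO0 [HF HFa]]]]] U.
  assert (HVs' : analytic Vs) by (intros x; exact (HVs x I)).
  assert (HW' : analytic W) by (intros x; exact (HW x I)).
  assert (HU : analytic U).
  { intros x. apply analytic_at_plus; apply analytic_at_scal.
    - apply analytic_Derive, HW'.
    - apply analytic_comp_opp, analytic_Derive, HW'. }
  assert (HUeven : forall x, U (- x) = U x).
  { apply analytic_even_of_odd_Derive_n_eq0; [exact HU|].
    apply (Derive_n_odd_eq0_of_even_arcsine_transform U HU (fun t => sqrt 2 * F t) 1 Rlt_0_1).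
    - apply analytic_at_scal, HF, HO0, Rle_refl.
    - intros r Hr. rewrite HFa by (apply pow_lt; lra).
      apply (arcsine_transform_a_fun V Vs W); try assumption. lra. }
  split; [exact HUeven|]. intros HVodd.
  apply NNPP. intros Hne. apply HVodd.
  apply (potential_even_of_Derive_inverse_even V Vs W); try assumption.
  intros x. specialize (HUeven x). unfold U in HUeven. rewrite Ropp_involutive in HUeven.
  assert (Hprod : (gamma - gammab) * (Derive W (- x) - Derive W x) = 0) by lra.
  apply Rmult_integral in Hprod. destruct Hprod; lra.
Qed.
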